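(* Let $\mathrm{char}(K)=0$ and $k\ge2$ an integer. Then $\frac{d}{dx}\big(\mathrm{Exp}_k(x)\big)=\mathrm{Exp}_k(x)$; equivalently, writing $\mathrm{Exp}_k(x)=\sum_n f_n$ with $f_n$ homogeneous of degree $n$, one has $\frac{d}{dx}f_n=f_{n-1}$ for all $n\ge1$.
   Context: Let $K$ be a field and let $x\neq y$ be two symbols. A finite planar reduced rooted tree is a finite rooted tree in which the children of each vertex are linearly ordered and no vertex has exactly one child; its leaves are the vertices without children. $P(x,y)$ is the set of isomorphism classes of pairs $S=(T,\lambda)$, $T$ a finite planar reduced rooted tree, $\lambda:L(T)\to\{x,y\}$ a labeling of its leaves; $\deg_x(S)=\#\lambda^{-1}(x)$, $\deg(S)=\#L(T)$. $P'(x,y)=P(x,y)\cup\{1_P\}$ with $1_P$ the empty tree (degree $0$). For $m\ge2$, $\bullet_m(S_1,\dots,S_m)$ is the tree with a new root whose ordered children are the roots of $S_1,\dots,S_m$, labelings inherited; on $P'(x,y)$ occurrences of $1_P$ are deleted, with $\bullet_1(S)=S$, $\bullet_0()=1_P$. $K\{\{x,y\}$: all $f=\sum_{S\in P'(x,y)}c_S(f)S$ such that for each $n$ only finitely many $S$ with $\deg_x(S)=n$ have $c_S(f)\ne0$; products $f_1\cdot\ldots\cdot f_m=\bullet_m(f_1,\dots,f_m)$ with $c_S(f_1\cdot\ldots\cdot f_m)=\sum_{\bullet_m(S_1,\dots,S_m)=S}c_{S_1}(f_1)\cdots c_{S_m}(f_m)$; $x$-adic topology from $\mathrm{ord}_x(f)=\min\{\deg_x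 S:c_S(f)\ne0\}$. $K\{\{x\}\}$: series supported on $1_P$ and trees with all leaves labeled $x$. For $g,h\in K\{\{x,y\}$ with $\mathrm{ord}_x(g)\ge1$, $\varphi_{(g,h)}$ denotes the unique $x$-adically continuous $K$-linear map preserving $1_P$ and all $\bullet_m$ with $x\mapsto g$, $y\mapsto h$. The universal derivation $d:K\{\{x\}\}\to K\{\{x,y\}$ is the continuous $K$-linear map with $d(1_P)=0$ and, for a tree $S=(T,\lambda)$ with all leaves $l_1,\dots,l_m$ labeled $x$, $d(S)=\sum_{i=1}^m(T,\lambda^{(i)})$ with $\lambda^{(i)}$ labeling $l_i$ by $y$ and the other leaves by $x$. The derivative $\frac{d}{dx}:K\{\{x\}\}\to K\{\{x\}\}$ is $\psi\circ d$, where $\psi=\varphi_{(x,1_P)}$ (so $x\mapsto x$, $y\mapsto 1$); concretely, $\frac{d}{dx}S$ for a tree $S$ with $m$ leaves is the sum over its leaves of the tree obtained by deleting that leaf (via $\bullet$ with $1_P$ in that position). For $\mathrm{char}K=0$ and an integer $k\ge2$, the $k$-ary planar exponential series $\mathrm{Exp}_k(x)=\sum_{n\ge0}f_n\in K\{\{x\}\}$ ($f_n$ homogeneous of degree $n$, i.e. supported on trees with $n$ leaves) is the unique series with $f_0=1_P$, $f_1=x$ satisfying $k^nf_n=\sum_{i_1+\dots+i_k=n}f_{i_1}\cdot f_{i_2}\cdot\ldots\cdot f_{i_k}$ ($k$-ary products) for all $n$, i.e. $f(kx)=\bullet_k(f,\dots,f)$. *)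

From HB Require Import structures.
From mathcomp Require Import all_boot all_order all_algebra.
Set Implicit Arguments. Unset Strict Implicit. Unset Printing Implicit Defensive.
Import GRing.Theory.
Local Open Scope ring_scope.

(* Planar rooted trees whose leaves are all labeled x, together with the
   empty tree 1_P.  [PNode l] is a new root whose ordered children are l. *)
Inductive ptree := PEmpty | PLeaf | PNode of seq ptree.

Fixpoint ptree_enc (t : ptree) : GenTree.tree unit :=
  match t with
  | PEmpty => GenTree.Node 0 [::]
  | PLeaf => GenTree.Node 1 [::]
  | PNode l => GenTree.Node 2 (map ptree_enc l)
  end.

Fixpoint ptree_dec (g : GenTree.tree unit) : option ptree :=
  match g with
  | GenTree.Leaf _ => None
  | GenTree.Node 0 _ => Some PEmpty
  | GenTree.Node 1 _ => Some PLeaf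
  | GenTree.Node _ l => Some (PNode (pmap ptree_dec l))
  end.

Lemma ptree_encK_aux : forall t : ptree, ptree_dec (ptree_enc t) = Some t.
Proof.
fix IH 1 => -[| |l] //=; congr (Some (PNode _)).
elim: l => [|c cs IHl] //=; by rewrite IH /= IHl.
Qed.

Lemma ptree_encK : pcancel ptree_enc ptree_dec.
Proof. exact: ptree_encK_aux. Qed.

HB.instance Definition _ := Countable.copy ptree (pcan_type ptree_encK).

(* Number of leaves (= deg = deg_x, all leaves being labeled x). *)
Fixpoint nleaves (t : ptree) : nat :=
  match t with
  | PEmpty => 0
  | PLeaf => 1
  | PNode l => sumn (map nleaves l)
  end.

(* Nonempty finite planar reduced rooted tree: no vertex has exactly one
   child (and, in our encoding, no internal vertex has zero children). *)
Fixpoint reduced_ne (t : ptree) : bool :=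
  match t with
  | PEmpty => false
  | PLeaf => true
  | PNode l => (2 <= size l)%N && all reduced_ne l
  end.

(* Elements of P'(x) = P(x) ∪ {1_P}. *)
Definition valid (t : ptree) : bool := (t == PEmpty) || reduced_ne t.

(* The grafting operation •_m on P'(x): occurrences of 1_P are deleted,
   •_1(S) = S, •_0() = 1_P. *)
Definition bullet (l : seq ptree) : ptree :=
  match filter (fun t => t != PEmpty) l with
  | [::] => PEmpty
  | [:: t] => t
  | l' => PNode l'
  end.

(* Series in K{{x}}: a coefficient for each tree (only the values on valid
   trees are meaningful).  Since there are finitely many trees with n leaves,
   every such function satisfies the finiteness condition. *)
Definition series (K : fieldType) := ptree -> K.

(* coefF fs ts = sum over all tuples (S_1,...,S_m) (m = size fs) in which
   each S_i is either 1_P or the next tree of ts, in order, all trees of ts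
   being used, of the product c_{S_1}(f_1)...c_{S_m}(f_m). *)
Fixpoint coefF (K : fieldType) (fs : seq (series K)) (ts : seq ptree) : K :=
  match fs with
  | [::] => if ts is [::] then 1 else 0
  | f :: fs' =>
      f PEmpty * coefF fs' ts +
      (if ts is t :: ts' then f t * coefF fs' ts' else 0)
  end.

(* Coefficient of a valid tree S in the product f_1 · ... · f_m = •_m(f_1,...,f_m):
   c_S = sum over (S_1,...,S_m) with •_m(S_1,...,S_m) = S of the product of
   the c_{S_i}(f_i).  For S = PNode l (l of size >= 2), •_m(S_1..S_m) = S iff
   the list of non-1_P entries is [:: S] or is l. *)
Definition prodc (K : fieldType) (fs : seq (series K)) (S : ptree) : K :=
  match S with
  | PEmpty => coefF fs [::]
  | PLeaf => coefF fs [:: PLeaf]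
  | PNode l => coefF fs [:: S] + coefF fs l
  end.

(* k-ary planar exponential: f_0 = 1_P, f_1 = x and f(kx) = •_k(f,...,f),
   i.e. k^n f_n = sum_{i_1+..+i_k = n} f_{i_1} ... f_{i_k} for all n. *)
Definition IsExp (K : fieldType) (k : nat) (f : series K) : Prop :=
  [/\ f PEmpty = 1, f PLeaf = 1 &
      forall S, valid S -> (k%:R) ^+ (nleaves S) * f S = prodc (nseq k f) S].

(* Deletion of the i-th leaf (left to right, 0-based) of a tree: the leaf
   is replaced by 1_P and the parent is rebuilt with •. *)
Fixpoint del (t : ptree) (i : nat) : ptree :=
  match t with
  | PEmpty => PEmpty
  | PLeaf => PEmpty
  | PNode l =>
      bullet ((fix dl (l : seq ptree) (i : nat) : seq ptree :=
                 match l with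
                 | [::] => [::]
                 | c :: cs => if (i < nleaves c)%N then del c i :: cs
                              else c :: dl cs (i - nleaves c)%N
                 end) l i)
  end.

(* g = d/dx f, where d/dx S = sum over the leaves of S of the tree obtained by
   deleting that leaf.  The coefficient of T in d/dx f is the (finite) sum of
   c_S(f) over pairs (S, leaf of S) whose deletion gives T; such S have
   nleaves T + 1 leaves, so the sum may be computed along any duplicate-free
   list L containing all valid trees with nleaves T + 1 leaves. *)
Definition is_ddx (K : fieldType) (f g : series K) : Prop :=
  forall T, valid T ->
  forall L : seq ptree, uniq L ->
    (forall S, valid S -> nleaves S = (nleaves T).+1 -> S \in L) ->
    g T = \sum_(S <- L | valid S) \sum_(i < nleaves S)
            (if del S i == T then f S else 0).

(* By the definition of [del], the coefficient of T in d/dx f is the sum of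
   f S over the pairs (S, i) with del S i = T, and [del_preimages T] lists these
   pairs without repetition.  For an exponential f, comparing the coefficients
   of a tree S = •(l) with n leaves in f(kx) = •_k(f, ..., f) gives
   (k^n - k) f(S) = C(k, |l|) ∏_{c in l} f(c).  Multiplying the sum by
   k^(n+1) - k, which is nonzero in characteristic 0, and using 2 C(k, 2) = k^2 - k
   and (m+1) C(k, m+1) + m C(k, m) = k C(k, m), induction on T shows that the sum
   is f(T).  Read as a recursive definition, the same identity produces an
   exponential. *)

From mathcomp Require Import all_boot all_order all_algebra zify ring.
Set Implicit Arguments. Unset Strict Implicit. Unset Printing Implicit Defensive.

Lemma ptree_ind_mem (P : ptree -> Prop) :
  P PEmpty -> P PLeaf -> (forall l, (forall c, c \in l -> P c) -> P (PNode l)) ->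
  forall t, P t.
Proof.
(* No [done] below: it would close goals with [IH] and break the guard condition. *)
move=> P0 P1 PN; fix IH 1 => -[| |l]; [exact: P0 | exact: P1 | apply: PN].
elim: l => [|c l IHl] d; first (rewrite in_nil => nil_false; discriminate nil_false).
rewrite inE => /predU1P[-> | /IHl //]; exact: IH.
Qed.

Notation nleaves_seq l := (sumn (map nleaves l)).

Fixpoint del_seq (l : seq ptree) (i : nat) : seq ptree :=
  if l is c :: cs then
    if i < nleaves c then del c i :: cs else c :: del_seq cs (i - nleaves c)
  else [::].

Lemma del_node l i : del (PNode l) i = bullet (del_seq l i).
Proof. by []. Qed.

Lemma del_seq_cat pre x post i : i < nleaves x ->
  del_seq (pre ++ x :: post) (nleaves_seq pre + i) = pre ++ del x i :: post.
Proof.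
move=> lt_i; elim: pre => [|c pre IH] /=; first by rewrite lt_i.
by rewrite -addnA ltnNge leq_addr /= addKn IH.
Qed.

Lemma leaf_index_split l i : i < nleaves_seq l ->
  exists pre x post j,
    [/\ l = pre ++ x :: post, i = nleaves_seq pre + j & j < nleaves x].
Proof.
elim: l i => [|c l IH] i //=; case: (ltnP i (nleaves c)) => [lt_ic _ | le_ci].
  by exists [::], c, l, i.
rewrite -ltn_subLR // => /IH[pre [x [post [j [-> def_i lt_j]]]]].
by exists (c :: pre), x, post, j; rewrite /= -addnA -def_i subnKC.
Qed.

Lemma reduced_nleaves_gt0 t : reduced_ne t -> 0 < nleaves t.
Proof.
elim/ptree_ind_mem: t => // -[|c l] IH //= /andP[_ /andP[c_red _]].
by rewrite addn_gt0 IH ?mem_head.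
Qed.

Lemma size_le_nleaves_seq l : all reduced_ne l -> size l <= nleaves_seq l.
Proof.
elim: l => //= c l IH /andP[c_red l_red].
by rewrite -add1n leq_add ?reduced_nleaves_gt0 ?IH.
Qed.

Lemma reduced_node_nleaves_gt1 l : reduced_ne (PNode l) -> 1 < nleaves_seq l.
Proof. by case/andP=> l_big /size_le_nleaves_seq; apply: leq_trans. Qed.

Lemma reduced_valid t : reduced_ne t -> valid t.
Proof. by rewrite /valid => ->; rewrite orbT. Qed.

Lemma valid_node l : valid (PNode l) = reduced_ne (PNode l).
Proof. by rewrite /valid; case: eqP. Qed.

Lemma reduced_neq_empty t : reduced_ne t -> t != PEmpty.
Proof. by case: t. Qed.

Lemma reduced_replace_child pre x y post : reduced_ne y ->
  reduced_ne (PNode (pre ++ x :: post)) -> reduced_ne (PNode (pre ++ y :: post)).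
Proof.
by move=> y_red; rewrite /= !size_cat !all_cat /= y_red => /and3P[-> -> /andP[_ ->]].
Qed.

Lemma reduced_insert_leaf l p :
  reduced_ne (PNode l) -> reduced_ne (PNode (take p l ++ PLeaf :: drop p l)).
Proof.
rewrite /= size_cat /= addnS -size_cat cat_take_drop ltnS all_cat /= -all_cat cat_take_drop.
by case/andP=> /ltnW -> ->.
Qed.

Lemma bullet_cat_empty pre post : bullet (pre ++ PEmpty :: post) = bullet (pre ++ post).
Proof. by rewrite /bullet !filter_cat. Qed.

Lemma bullet1 t : reduced_ne t -> bullet [:: t] = t.
Proof. by move=> t_red; rewrite /bullet /= reduced_neq_empty. Qed.

Lemma bullet_node l : all reduced_ne l -> 1 < size l -> bullet l = PNode l.
Proof.
move=> l_red; rewrite /bullet (all_filterP (sub_all reduced_neq_empty l_red)).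
by case: l {l_red} => [|? []].
Qed.

Lemma nleaves_bullet l : nleaves (bullet l) = nleaves_seq l.
Proof.
have -> : nleaves_seq l = nleaves_seq [seq t <- l | t != PEmpty].
  by elim: l => //= t l ->; case: eqP => [->|].
rewrite /bullet; case: [seq t <- l | t != PEmpty] => [|t [|u l']] //=.
by rewrite addn0.
Qed.

Lemma valid_bullet l : all valid l -> valid (bullet l).
Proof.
move=> l_valid; rewrite /bullet.
have : all reduced_ne [seq t <- l | t != PEmpty].
  rewrite all_filter; apply: sub_all l_valid => t /orP[/eqP-> // | t_red].
  exact/implyP.
case: [seq t <- l | t != PEmpty] => [_|t [|u l'] /=]; first by rewrite /valid eqxx.
  by rewrite andbT => /reduced_valid.
by move=> l'_red; apply: reduced_valid; rewrite /= l'_red.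
Qed.

Lemma nleaves_del S i : i < nleaves S -> nleaves (del S i) = (nleaves S).-1.
Proof.
elim/ptree_ind_mem: S i => [//|//|l IH i].
move=> /leaf_index_split[pre [x [post [j [def_l -> lt_j]]]]]; subst l.
rewrite del_node del_seq_cat // nleaves_bullet /= !map_cat !sumn_cat /=.
rewrite IH ?mem_cat ?mem_head ?orbT //.
by case: (nleaves x) lt_j => // n _; rewrite addSn addnS.
Qed.

Lemma valid_del S i : valid S -> valid (del S i).
Proof.
elim/ptree_ind_mem: S i => [||l IH] i; rewrite /valid ?eqxx //=.
case/andP=> _ l_red; apply: valid_bullet.
elim: l i l_red IH => //= c l IHl i /andP[c_red l_red] IH.
case: ifP => _ /=.
  by rewrite IH ?mem_head ?reduced_valid //= (sub_all reduced_valid l_red).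
rewrite reduced_valid //= IHl // => d d_in; apply: IH.
by rewrite inE d_in orbT.
Qed.

Lemma reduced_del S i : reduced_ne S -> 1 < nleaves S -> i < nleaves S ->
  reduced_ne (del S i).
Proof.
move=> S_red S_big lt_i; have := valid_del i (reduced_valid S_red).
case/orP => // /eqP del0; have := nleaves_del lt_i; rewrite del0 /=.
by case: (nleaves S) S_big => [|[|n]] // _ [].
Qed.

(* The pairs (S, i) with [del S i = t]: the new leaf is grafted beside the root
   (on either side), becomes a new child of the root at one of its [size l + 1]
   positions, or is inserted inside one child ([nth] of [map] keeps the
   recursion structural). *)
Fixpoint del_preimages (t : ptree) : seq (ptree * nat) :=
  match t with
  | PEmpty => [:: (PLeaf, 0)]
  | PLeaf => [:: (PNode [:: PLeaf; PLeaf], 0); (PNode [:: PLeaf; PLeaf], 1)]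
  | PNode l =>
    [:: (PNode [:: PLeaf; PNode l], 0); (PNode [:: PNode l; PLeaf], nleaves_seq l)]
    ++ [seq (PNode (take p l ++ PLeaf :: drop p l), nleaves_seq (take p l))
         | p <- iota 0 (size l).+1]
    ++ [seq (PNode (take j l ++ y.1 :: drop j.+1 l), nleaves_seq (take j l) + y.2)
         | j <- iota 0 (size l), y <- nth [::] (map del_preimages l) j]
  end.

Lemma del_preimages_node l : del_preimages (PNode l) =
    [:: (PNode [:: PLeaf; PNode l], 0); (PNode [:: PNode l; PLeaf], nleaves_seq l)]
    ++ [seq (PNode (take p l ++ PLeaf :: drop p l), nleaves_seq (take p l))
         | p <- iota 0 (size l).+1]
    ++ [seq (PNode (take j l ++ y.1 :: drop j.+1 l), nleaves_seq (take j l) + y.2)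
         | j <- iota 0 (size l), y <- nth [::] (map del_preimages l) j].
Proof. by []. Qed.

Lemma cat_take_nth_drop (T : Type) (x0 : T) (s : seq T) j : j < size s ->
  take j s ++ nth x0 s j :: drop j.+1 s = s.
Proof. by move=> lt_j; rewrite -drop_nth // cat_take_drop. Qed.

Lemma del_graft_left T : reduced_ne T -> del (PNode [:: PLeaf; T]) 0 = T.
Proof.
move=> T_red; have -> : del (PNode [:: PLeaf; T]) 0 = bullet ([::] ++ PEmpty :: [:: T]).
  by [].
by rewrite bullet_cat_empty bullet1.
Qed.

Lemma del_graft_right T : reduced_ne T -> del (PNode [:: T; PLeaf]) (nleaves T) = T.
Proof.
move=> T_red; have del_T := @del_seq_cat [:: T] PLeaf [::] 0 isT.
rewrite -[del_seq _ _]/(del_seq [:: T; PLeaf] (nleaves T + 0 + 0)) !addn0 in del_T.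
by rewrite del_node del_T bullet_cat_empty bullet1.
Qed.

Lemma del_insert_child l p : all reduced_ne l -> 1 < size l ->
  del (PNode (take p l ++ PLeaf :: drop p l)) (nleaves_seq (take p l)) = PNode l.
Proof.
move=> l_red l_big; rewrite del_node -[nleaves_seq (take p l)]addn0 del_seq_cat //=.
by rewrite bullet_cat_empty cat_take_drop bullet_node.
Qed.

Lemma del_in_child pre post y j : j < nleaves y ->
  all reduced_ne (pre ++ del y j :: post) -> 1 < size (pre ++ y :: post) ->
  del (PNode (pre ++ y :: post)) (nleaves_seq pre + j) = PNode (pre ++ del y j :: post).
Proof.
move=> lt_j red big; rewrite del_node del_seq_cat // bullet_node //.
by move: big; rewrite !size_cat.
Qed.

Lemma mem_del_preimages T x : valid T -> x \in del_preimages T ->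
  [/\ reduced_ne x.1, x.2 < nleaves x.1 & del x.1 x.2 = T].
Proof.
elim/ptree_ind_mem: T x => [x _|x _|l IH x]; first by rewrite inE => /eqP ->.
  by rewrite !inE => /orP[] /eqP ->.
rewrite valid_node => /[dup] T_red /andP[l_big l_red].
rewrite del_preimages_node !mem_cat.
case/or3P=> [| /mapP[p _ ->] | /allpairsPdep[j [y [lt_j y_in ->]]]].
- rewrite !inE => /orP[] /eqP->; split; rewrite ?del_graft_left ?del_graft_right //=.
  + by rewrite l_big l_red.
  + by rewrite l_big l_red.
  + by rewrite addn0 addn1.
- split=> /=; [exact: reduced_insert_leaf | | exact: del_insert_child].
  by rewrite map_cat sumn_cat /=; lia.
- rewrite mem_iota in lt_j; rewrite (nth_map PEmpty) // in y_in.
  have def_l := cat_take_nth_drop PEmpty lt_j.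
  set c := nth PEmpty l j in y_in def_l.
  have c_in : c \in l by exact: mem_nth.
  have [y_red lt_y del_y] := IH c c_in y (reduced_valid (allP l_red c c_in)) y_in.
  move: T_red l_big; rewrite -{1 2}def_l => T_red l_big.
  split; cbn [fst snd].
  + exact: reduced_replace_child T_red.
  + by rewrite /= map_cat sumn_cat /= ltn_add2l ltn_addr.
  + rewrite del_in_child ?del_y ?def_l //.
    by move: l_big; rewrite !size_cat.
Qed.

Lemma del_preimages_graft_left T : reduced_ne T ->
  (PNode [:: PLeaf; T], 0) \in del_preimages T.
Proof. by case: T => [| |l] // _; rewrite del_preimages_node mem_cat mem_head. Qed.

Lemma del_preimages_graft_right T : reduced_ne T ->
  (PNode [:: T; PLeaf], nleaves T) \in del_preimages T.
Proof.
by case: T => [| |l] // _; rewrite del_preimages_node mem_cat !inE eqxx orbT.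
Qed.

Lemma del_preimages_insert_child l p : p <= size l ->
  (PNode (take p l ++ PLeaf :: drop p l), nleaves_seq (take p l))
    \in del_preimages (PNode l).
Proof.
move=> le_p; rewrite del_preimages_node !mem_cat; apply/or3P/Or32.
by apply/mapP; exists p; rewrite // mem_iota.
Qed.

Lemma del_preimages_in_child pre c post y : y \in del_preimages c ->
  (PNode (pre ++ y.1 :: post), nleaves_seq pre + y.2)
    \in del_preimages (PNode (pre ++ c :: post)).
Proof.
have lt_pre : size pre < size (pre ++ c :: post).
  by rewrite size_cat /= addnS ltnS leq_addr.
move=> y_in; rewrite del_preimages_node !mem_cat; apply/or3P/Or33.
apply/allpairsPdep; exists (size pre), y; split; first by rewrite mem_iota.
  by rewrite (nth_map PEmpty) // nth_cat ltnn subnn.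
by rewrite take_size_cat // drop_cat ltnNge leqnSn /= subSnn /= drop0.
Qed.

Lemma del_preimages_leaf_child pre post :
  all reduced_ne (pre ++ post) -> 0 < size (pre ++ post) ->
  (PNode (pre ++ PLeaf :: post), nleaves_seq pre) \in del_preimages (bullet (pre ++ post)).
Proof.
case def_s: (pre ++ post) => [|T [|U s]] // s_red _.
  have T_red : reduced_ne T by case/andP: s_red.
  rewrite bullet1 //; case: pre def_s => [/= -> | T' [|U' p]] /=; [| case=> -> -> | by case].
    exact: del_preimages_graft_left.
  by rewrite addn0 del_preimages_graft_right.
rewrite -def_s bullet_node ?def_s // -def_s.
have := @del_preimages_insert_child (pre ++ post) (size pre).
by rewrite take_size_cat // drop_size_cat // size_cat leq_addr => /(_ isT).
Qed.

Lemma del_preimages_complete S i : reduced_ne S -> i < nleaves S ->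
  (S, i) \in del_preimages (del S i).
Proof.
elim/ptree_ind_mem: S i => [//|i _|l IH i].
  by rewrite ltnS leqn0 => /eqP->; exact: mem_head.
move=> S_red /leaf_index_split[pre [x [post [j [def_l -> lt_j]]]]]; subst l.
case/andP: S_red => S_big; rewrite all_cat => /and3P[pre_red x_red post_red].
have sizes_cat y : size (pre ++ y :: post) = (size (pre ++ post)).+1.
  by rewrite !size_cat addnS.
rewrite del_node del_seq_cat //.
case: x x_red lt_j IH S_big => [//| |lx] x_red lt_j IH S_big.
  move: lt_j; rewrite ltnS leqn0 => /eqP->; rewrite addn0 bullet_cat_empty.
  apply: del_preimages_leaf_child; first by rewrite all_cat pre_red.
  by move: S_big; rewrite sizes_cat.
rewrite bullet_node ?sizes_cat -?(sizes_cat (PNode lx)) //; last first.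
  rewrite all_cat; apply/and3P; split=> //.
  exact: (@reduced_del (PNode lx) j x_red (reduced_node_nleaves_gt1 x_red)).
apply: (@del_preimages_in_child pre (del (PNode lx) j) post (PNode lx, j)).
by apply: IH; rewrite // mem_cat mem_head orbT.
Qed.

Fixpoint leaf_child (l : seq ptree) (i : nat) : nat * nat :=
  if l is c :: cs then
    if i < nleaves c then (0, i)
    else let p := leaf_child cs (i - nleaves c) in (p.1.+1, p.2)
  else (0, i).

Lemma leaf_child_cat pre x post i : i < nleaves x ->
  leaf_child (pre ++ x :: post) (nleaves_seq pre + i) = (size pre, i).
Proof.
move=> lt_i; elim: pre => [|c pre IH] /=; first by rewrite lt_i.
by rewrite -addnA ltnNge leq_addr /= addKn IH.
Qed.

(* For a leaf of a tree: the number of root children, which child holds the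
   leaf, that child, and the index of the leaf inside it.  This key separates
   the elements of [del_preimages t]. *)
Definition root_split (x : ptree * nat) : nat * nat * ptree * nat :=
  if x.1 is PNode l then
    let p := leaf_child l x.2 in (size l, p.1, nth PEmpty l p.1, p.2)
  else (0, 0, PEmpty, 0).

Lemma root_split_cat pre x post i : i < nleaves x ->
  root_split (PNode (pre ++ x :: post), nleaves_seq pre + i) =
    (size (pre ++ x :: post), size pre, x, i).
Proof. by move=> lt_i; rewrite /root_split /= leaf_child_cat // nth_cat ltnn subnn. Qed.

Lemma map_root_split_del_preimages l : reduced_ne (PNode l) ->
  map root_split (del_preimages (PNode l)) =
    [:: (2, 0, PLeaf, 0); (2, 1, PLeaf, 0)]
    ++ [seq ((size l).+1, p, PLeaf, 0) | p <- iota 0 (size l).+1]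
    ++ [seq (size l, j, y.1, y.2)
         | j <- iota 0 (size l), y <- nth [::] (map del_preimages l) j].
Proof.
case/andP=> _ l_red; rewrite del_preimages_node !map_cat; congr (_ ++ (_ ++ _)).
- have := @root_split_cat [:: PNode l] PLeaf [::] 0 isT.
  by rewrite /= !addn0 => ->.
- rewrite -map_comp; apply/eq_in_map => p; rewrite mem_iota ltnS => /= le_p.
  rewrite -[nleaves_seq (take p l)]addn0 root_split_cat // size_cat /= addnS.
  by rewrite -size_cat cat_take_drop size_takel.
rewrite map_allpairs; apply/eq_in_allpairs_dep => j; rewrite mem_iota /= => lt_j y.
rewrite (nth_map PEmpty) // => y_in.
have c_red : reduced_ne (nth PEmpty l j) by apply: (allP l_red); rewrite mem_nth.
have [_ lt_y _] := mem_del_preimages (reduced_valid c_red) y_in.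
have le_j := ltnW lt_j.
by rewrite root_split_cat // size_cat /= size_takel ?size_drop ?subnSK ?subnKC.
Qed.

Lemma uniq_del_preimages t : valid t -> uniq (del_preimages t).
Proof.
elim/ptree_ind_mem: t => [//|//|l IH]; rewrite valid_node => t_red.
apply: (@map_uniq _ _ root_split); rewrite map_root_split_del_preimages //.
have [l_big l_red] := andP t_red.
set B := [seq _ | p <- _]; set C := [seq _ | j <- _, y <- _].
have B_leaf z : z \in B -> z.1.2 = PLeaf /\ z.1.1.1 = (size l).+1.
  by case/mapP=> p _ ->.
have C_node z : z \in C -> z.1.2 != PLeaf.
  case/allpairsPdep=> j [y [lt_j y_in ->]] /=; rewrite mem_iota /= in lt_j.
  rewrite (nth_map PEmpty) // in y_in.
  have c_red : reduced_ne (nth PEmpty l j) by apply: (allP l_red); rewrite mem_nth.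
  have [_ _] := mem_del_preimages (reduced_valid c_red) y_in.
  by case: (y.1) => // del_y; move: c_red; rewrite -del_y.
have uniq_C : uniq C.
  apply: allpairs_uniq_dep; first exact: iota_uniq.
    move=> j; rewrite mem_iota /= => lt_j; rewrite (nth_map PEmpty) //.
    by apply: IH; rewrite ?mem_nth // reduced_valid //; apply: (allP l_red); rewrite mem_nth.
  by move=> [j [t1 i]] [j' [t2 i']] _ _ [-> -> ->].
rewrite !cat_uniq uniq_C map_inj_uniq ?iota_uniq; last by move=> p q [].
rewrite andbT andTb; apply/and3P; split=> //; last first.
  by apply/hasPn => z /C_node; apply: contra => /B_leaf[-> _].
apply/hasPn => z z_in; apply/negP; rewrite !inE => /orP[] /eqP z_eq.
all: move: z_in; rewrite mem_cat z_eq => /orP[/B_leaf[_ /= ?] | /C_node].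
all: by [lia | rewrite eqxx].
Qed.

Import GRing.Theory.
Local Open Scope ring_scope.

Section PlanarExponential.
Variables (K : fieldType) (k : nat).

Lemma coefF_nseq (f : series K) ts : f PEmpty = 1 ->
  coefF (nseq k f) ts = 'C(k, size ts)%:R * \prod_(t <- ts) f t.
Proof.
move=> f0; elim: k ts => [|k' IH] [|t ts] /=.
- by rewrite big_nil mulr1.
- by rewrite mul0r.
- by rewrite f0 mul1r IH addr0 !bin0.
by rewrite f0 mul1r !IH big_cons binS natrD mulrDl [f t * (_ * _)]mulrCA.
Qed.

Definition children (t : ptree) : seq ptree := if t is PNode l then l else [::].

(* The part of the coefficient of [t] in [•_k(f, ..., f)] that does not come
   from the terms [•_k(1, ..., t, ..., 1)]. *)
Definition children_coef (f : series K) (t : ptree) : K :=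
  'C(k, size (children t))%:R * \prod_(c <- children t) f c.

Lemma IsExp_node (f : series K) l : IsExp k f -> reduced_ne (PNode l) ->
  (k%:R ^+ nleaves_seq l - k%:R) * f (PNode l) = children_coef f (PNode l).
Proof.
case=> f0 _ f_exp l_red; have := f_exp _ (reduced_valid l_red).
rewrite /prodc !coefF_nseq //= big_seq1 bin1 mulrBl => ->.
by rewrite addrAC subrr add0r.
Qed.

Hypotheses (K_char0 : [pchar K] =i pred0) (k_ge2 : (2 <= k)%N).

Lemma exp_sub_neq0 n : (1 < n)%N -> (k%:R ^+ n - k%:R : K) != 0.
Proof.
move=> n_gt1; have lt_k_kn : (k < k ^ n)%N by rewrite -{1}[k]expn1 ltn_exp2l.
by rewrite -natrX -natrB ?(ltnW lt_k_kn) // (pcharf0P K).1 // subn_eq0 -ltnNge.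
Qed.

Lemma bin2_double : 'C(k, 2)%:R *+ 2 = k%:R ^+ 2 - k%:R :> K.
Proof.
rewrite -mulr_natr -natrM mulnC (mul_bin_left k 1) bin1 natrM natrB ?(ltnW k_ge2) //.
by rewrite expr2 mulrBl mul1r.
Qed.

Lemma IsExp_del_preimage (f : series K) T x : IsExp k f -> reduced_ne T ->
  x \in del_preimages T ->
  (k%:R ^+ (nleaves T).+1 - k%:R) * f x.1 = children_coef f x.1.
Proof.
move=> f_exp T_red x_in.
have [x_red lt_i del_x] := mem_del_preimages (reduced_valid T_red) x_in.
have nleaves_x : nleaves x.1 = (nleaves T).+1.
  by rewrite -del_x nleaves_del // prednK // reduced_nleaves_gt0.
case: (x.1) x_red nleaves_x => [//| _ [] T0 | l x_red <-]; last exact: IsExp_node.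
by move: (reduced_nleaves_gt0 T_red); rewrite -T0.
Qed.

Lemma children_coef_mid (f : series K) pre y post :
  children_coef f (PNode (pre ++ y :: post)) =
    'C(k, (size (pre ++ post)).+1)%:R * \prod_(c <- pre ++ post) f c * f y.
Proof.
rewrite /children_coef /= size_cat addnS -size_cat !big_cat big_cons /=.
by rewrite -!mulrA [f y * _]mulrC.
Qed.

Lemma sum_children_coef_insert_leaf (f : series K) l : f PLeaf = 1 ->
  \sum_(p <- iota 0 (size l).+1)
     children_coef f (PNode (take p l ++ PLeaf :: drop p l))
  = ('C(k, (size l).+1)%:R * \prod_(c <- l) f c) *+ (size l).+1.
Proof.
move=> f1; rewrite [LHS](eq_bigr (fun=> 'C(k, (size l).+1)%:R * \prod_(c <- l) f c)).
  by rewrite -[iota 0 _]/(index_iota 0 (size l).+1) sumr_const_nat subn0.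
by move=> p _; rewrite children_coef_mid cat_take_drop f1 mulr1.
Qed.

Lemma sum_children_coef_in_child (f : series K) l :
  {in l, forall c, \sum_(y <- del_preimages c) f y.1 = f c} ->
  \sum_(j <- iota 0 (size l)) \sum_(y <- nth [::] (map del_preimages l) j)
     children_coef f (PNode (take j l ++ y.1 :: drop j.+1 l))
  = children_coef f (PNode l) *+ size l.
Proof.
move=> sum_child; rewrite [LHS](eq_big_seq (fun=> children_coef f (PNode l))).
  have -> : iota 0 (size l) = index_iota 0 (size l) by rewrite /index_iota subn0.
  by rewrite sumr_const_nat subn0.
move=> j; rewrite mem_iota /= => lt_j; rewrite (nth_map PEmpty) //.
have def_l := cat_take_nth_drop PEmpty lt_j; set c := nth PEmpty l j in def_l *.
under eq_bigr => y _ do rewrite children_coef_mid.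
by rewrite -mulr_sumr sum_child ?mem_nth // -children_coef_mid def_l.
Qed.

Lemma mulSn_binS_add m : (m.+1 * 'C(k, m.+1) + m * 'C(k, m) = k * 'C(k, m))%N.
Proof.
rewrite mul_bin_left -mulnDl; case: (leqP m k) => [le_mk | lt_km].
  by rewrite subnK.
by rewrite bin_small // !muln0.
Qed.

Lemma binS_coef_add (P : K) m :
  ('C(k, m.+1)%:R * P) *+ m.+1 + ('C(k, m)%:R * P) *+ m = k%:R * ('C(k, m)%:R * P).
Proof.
rewrite -!(mulr_natl (_ * _)) !mulrA -mulrDl -!natrM -natrD.
by rewrite mulSn_binS_add natrM.
Qed.

Lemma children_coef_grafts (f : series K) T : f PLeaf = 1 ->
  children_coef f (PNode [:: PLeaf; T]) + children_coef f (PNode [:: T; PLeaf]) =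
    (k%:R ^+ 2 - k%:R) * f T.
Proof.
move=> f1; rewrite -bin2_double /children_coef; cbn [children size].
by rewrite !big_cons big_nil f1 mul1r !mulr1 mulr2n mulrDl.
Qed.

Lemma sum_del_preimages (f : series K) T : IsExp k f -> valid T ->
  \sum_(x <- del_preimages T) f x.1 = f T.
Proof.
move=> f_exp; have [f0 f1 _] := f_exp.
elim/ptree_ind_mem: T => [_|_|l IH]; first by rewrite big_seq1 f0 f1.
  apply: (mulfI (exp_sub_neq0 (isT : 1 < 2)%N)); rewrite mulr_sumr.
  under eq_big_seq => x x_in do rewrite (@IsExp_del_preimage f PLeaf x f_exp isT x_in).
  by rewrite big_cons big_seq1 children_coef_grafts.
rewrite valid_node => T_red; set n := nleaves_seq l.
apply: (mulfI (exp_sub_neq0 (ltnW (reduced_node_nleaves_gt1 T_red) : 1 < n.+1)%N)).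
rewrite mulr_sumr.
under eq_big_seq => x x_in do rewrite (IsExp_del_preimage f_exp T_red x_in).
rewrite del_preimages_node !big_cat big_map big_allpairs_dep.
rewrite sum_children_coef_insert_leaf // sum_children_coef_in_child; last first.
  move=> c c_in; apply: IH; rewrite // reduced_valid //.
  by case/andP: T_red => _ /allP; apply.
rewrite big_cons big_seq1 /= children_coef_grafts // binS_coef_add.
rewrite -[_ * \prod_(c <- l) f c]/(children_coef f (PNode l)) -IsExp_node //.
by rewrite (exprS _ n); ring.
Qed.

Lemma IsExp_is_ddx (f : series K) : IsExp k f -> is_ddx f f.
Proof.
move=> f_exp T T_valid L L_uniq L_complete.
rewrite -(sum_del_preimages f_exp T_valid).
set Q := [seq x <- [seq (t, i) | t <- [seq t <- L | valid t], i <- iota 0 (nleaves t)]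
            | del x.1 x.2 == T].
have perm_Q : perm_eq (del_preimages T) Q.
  apply: uniq_perm; first exact: uniq_del_preimages.
    rewrite filter_uniq // allpairs_uniq_dep ?filter_uniq // => [t _|].
      exact: iota_uniq.
    by move=> [t i] [t' i'] _ _ /= [-> ->].
  move=> [t i]; rewrite mem_filter /=; apply/idP/idP.
    move=> x_in; have [t_red lt_i del_t] := mem_del_preimages T_valid x_in.
    rewrite /= in t_red lt_i del_t; rewrite del_t eqxx /=.
    apply/allpairsPdep; exists t, i; split; rewrite ?mem_iota //.
    rewrite mem_filter reduced_valid // L_complete ?reduced_valid //.
    by rewrite -del_t nleaves_del // prednK // reduced_nleaves_gt0.
  case/andP=> /eqP <- /allpairsPdep[t' [i' [t_in lt_i [def_t def_i]]]].
  subst t' i'; move: t_in lt_i; rewrite mem_filter mem_iota => /andP[t_valid _] lt_i.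
  have t_red : reduced_ne t by case/orP: t_valid => // /eqP t0; rewrite t0 in lt_i.
  exact: del_preimages_complete.
rewrite (perm_big _ perm_Q) big_filter big_mkcond big_allpairs_dep /= -[in RHS]big_filter.
apply: eq_bigr => t _.
have -> : iota 0 (nleaves t) = index_iota 0 (nleaves t) by rewrite /index_iota subn0.
by rewrite big_mkord.
Qed.

Fixpoint exp_series (t : ptree) : K :=
  match t with
  | PEmpty | PLeaf => 1
  | PNode l => 'C(k, size l)%:R * \prod_(c <- map exp_series l) c /
               (k%:R ^+ nleaves_seq l - k%:R)
  end.

Lemma IsExp_exp_series : IsExp k exp_series.
Proof.
split=> // -[_|_|l]; rewrite /prodc !coefF_nseq //.
- by rewrite expr0 mul1r bin0 big_nil mulr1.
- by rewrite expr1 mulr1 bin1 big_seq1 mulr1.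
rewrite valid_node => l_red; have q_neq0 := exp_sub_neq0 (reduced_node_nleaves_gt1 l_red).
have coef_l : (k%:R ^+ nleaves_seq l - k%:R) * exp_series (PNode l) =
    'C(k, size l)%:R * \prod_(c <- l) exp_series c.
  by rewrite /= big_map mulrC divfK.
by rewrite big_seq1 bin1 -coef_l mulrBl addrC subrK.
Qed.

End PlanarExponential.

Theorem proposition6p2 (K : fieldType) (k : nat) :
  [pchar K] =i pred0 -> (2 <= k)%N ->
  (exists f : series K, IsExp k f) /\
  (forall f : series K, IsExp k f -> is_ddx f f).
Proof.
move=> K_char0 k_ge2; split; first by exists (exp_series K k); exact: IsExp_exp_series.
by move=> f; exact: IsExp_is_ddx.
Qed.
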